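(* Consider the online firefighter game on the infinite square grid $\mathbb{L}_2=\mathbb{Z}\times\mathbb{Z}$ (described in the context). There is an online strategy for Player 1 that wins against every firefighter sequence $(f_i)_{i\geq 1}$ revealed by Player 2 which satisfies both: (i) there exists $N\geq 1$ with $\sum_{i=1}^N f_i\geq 4N$; and (ii) there exists an index $M\geq 1$ such that $f_i\geq 1$ for all $i\geq M$ and $f_i=0$ for all $i<M$.
   Context: The grid $\mathbb{L}_2$ has vertex set $\mathbb{Z}\times\mathbb{Z}$, with $(x,y)$ adjacent to $(x',y')$ iff $|x-x'|+|y-y'|=1$. A fire starts at an ignition vertex $v$ at time $0$ (so $v$ is burning). A firefighter sequence is a sequence $(f_i)_{i\geq 1}$ of non-negative integers. At each turn $i\geq 1$: Player 1 chooses at most $f_i$ vertices that are neither burning nor protected and protects them; then the fire spreads from every burning vertex to all of its unprotected neighbours. Once a vertex is burning or protected it remains so forever; unused firefighters are not carried over. Player 2 wins if at every turn some new vertex starts burning; otherwise Player 1 wins (the fire is contained). In the online version the sequence is chosen by Player 2 and revealed turn by turn: at turn $i$ Player 2 reveals $f_i$ to Player 1 just before Player 1 places firefighters, so an online strategy of Player 1 chooses its moves at turn $i$ based only on $f_1,\dots,f_i$ and the history of the game so far (in particular without knowing $M$ or $N$ in advance). *)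

From mathcomp Require Import all_boot all_order all_algebra.
Set Implicit Arguments. Unset Strict Implicit. Unset Printing Implicit Defensive.
Import Order.TTheory GRing.Theory Num.Theory.

Definition vertex := (int * int)%type.

Definition adjacent (p q : vertex) : Prop :=
  (`|p.1 - q.1|%N + `|p.2 - q.2|%N = 1)%N.

(* A firefighter sequence is f : nat -> nat, where f i is f_i for i >= 1
   (the value f 0 is irrelevant). *)
Definition prefix (f : nat -> nat) (i : nat) : seq nat :=
  [seq f j | j <- iota 1 i].

(* An online strategy of Player 1: given the revealed values f_1,...,f_i
   (as the list [f_1; ...; f_i]) it returns the vertices protected at turn i.
   Since the strategy is deterministic and the ignition vertex is fixed,
   the whole history of the game is a function of f_1..f_{i-1}, so this
   captures "moves based on f_1..f_i and the history so far". *)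
Definition online_strategy := seq nat -> seq vertex.

Fixpoint game_state (v : vertex) (s : online_strategy) (f : nat -> nat)
    (i : nat) : (vertex -> Prop) * (vertex -> Prop) :=
  match i with
  | 0 => (fun _ => False, fun x => x = v)
  | i'.+1 =>
      let P := (game_state v s f i').1 in
      let B := (game_state v s f i').2 in
      let P' := fun x => P x \/ x \in s (prefix f i) in
      (P', fun x => B x \/ (~ P' x /\ exists y, adjacent y x /\ B y))
  end.

Definition protected v s f i := (game_state v s f i).1.
Definition burning v s f i := (game_state v s f i).2.

Definition legal_play (v : vertex) (s : online_strategy) (f : nat -> nat) :=
  forall i, (1 <= i)%N ->
    (size (s (prefix f i)) <= f i)%N /\
    forall x, x \in s (prefix f i) ->
      ~ burning v s f i.-1 x /\ ~ protected v s f i.-1 x.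

Definition player1_wins (v : vertex) (s : online_strategy) (f : nat -> nat) :=
  exists i, (1 <= i)%N /\
    forall x, burning v s f i x -> burning v s f i.-1 x.

From Pilot Require Import Defs.
From mathcomp Require Import all_boot all_order all_algebra.
From mathcomp Require Import zify ring.
From Stdlib Require Import Classical_Prop.
Set Implicit Arguments. Unset Strict Implicit. Unset Printing Implicit Defensive.
Import Order.TTheory GRing.Theory Num.Theory.
Local Open Scope ring_scope.

(* Player 1 only ever protects vertices of the layer {x | d(v, x) = i} that the fire
   reaches at turn i.  On each layer the vertices the fire can never reach form a cyclic arc:
   the protected vertices of the layer together with its shadow, the vertices all of whose
   inner neighbours lie in the arc of the previous layer.  The shadow of an arc is the arc
   one layer further out, one position longer for each corner it passes, and the new
   firefighters extend it at one end, alternating between the two ends.  The unprotected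
   ends of a shadow could still catch fire from the next layer, but that layer is extended
   precisely at the end that was not extended before, which seals them; this needs f_i >= 1
   from the first nonzero f_i on.  Each firefighter adds one position to the arc, so when
   f_1 + ... + f_N >= 4N the arc of layer N is the whole layer and the fire stops. *)

Definition norm1 (p : vertex) : nat := (`|p.1| + `|p.2|)%N.

(* The points p with norm1 p = K > 0 form a cycle of length 4K, which [diamond_pos]
   numbers counterclockwise from (K, 0); [diamond_pt] is the inverse numbering. *)
Definition diamond_pos (K : int) (p : vertex) : int :=
  if (0 < p.1) && (0 <= p.2) then p.2
  else if (p.1 <= 0) && (0 < p.2) then K - p.1
  else if (p.1 < 0) && (p.2 <= 0) then 2 * K - p.2
  else 3 * K + p.1.

Lemma diamond_pos_cases (K : int) (p : vertex) :
  (0 < p.1 /\ 0 <= p.2 /\ diamond_pos K p = p.2) \/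
  (p.1 <= 0 /\ 0 < p.2 /\ diamond_pos K p = K - p.1) \/
  (p.1 < 0 /\ p.2 <= 0 /\ diamond_pos K p = 2 * K - p.2) \/
  (0 <= p.1 /\ p.2 <= 0 /\ (p.1 = 0 \/ p.2 < 0) /\ diamond_pos K p = 3 * K + p.1).
Proof.
rewrite /diamond_pos; case: ifP => /andP H1; first lia.
case: ifP => /andP H2; first lia.
case: ifP => /andP H3; lia.
Qed.

Definition diamond_pt (K j : int) : vertex :=
  if j < K then (K - j, j)
  else if j < 2 * K then (K - j, 2 * K - j)
  else if j < 3 * K then (j - 3 * K, 2 * K - j)
  else (j - 3 * K, j - 4 * K).

Lemma diamond_pt_cases (K j : int) :
  (j < K /\ diamond_pt K j = (K - j, j)) \/
  (K <= j < 2 * K /\ diamond_pt K j = (K - j, 2 * K - j)) \/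
  (2 * K <= j < 3 * K /\ diamond_pt K j = (j - 3 * K, 2 * K - j)) \/
  (3 * K <= j /\ diamond_pt K j = (j - 3 * K, j - 4 * K)).
Proof.
rewrite /diamond_pt; case: ifP => H1; first by left.
case: ifP => H2; first by right; left; split => //; lia.
case: ifP => H3; first by right; right; left; split => //; lia.
by right; right; right; split => //; lia.
Qed.

Lemma diamond_pos_range (k : nat) (p : vertex) : (0 < k)%N -> norm1 p = k ->
  0 <= diamond_pos k p < 4 * k%:Z.
Proof. rewrite /norm1 => k_gt0 Hp; have := diamond_pos_cases k p; lia. Qed.

Lemma diamond_posK (k : nat) (p : vertex) : (0 < k)%N -> norm1 p = k ->
  diamond_pt k (diamond_pos k p) = p.
Proof.
rewrite /norm1 => k_gt0 Hp; case: p Hp => a b /= Hp.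
have := diamond_pos_cases k (a, b).
by case: (diamond_pt_cases k (diamond_pos k (a, b))) =>
  [[? ->]|[[? ->]|[[? ->]|[? ->]]]] /= ?; congr pair; lia.
Qed.

Lemma diamond_ptK (k : nat) (j : int) : (0 < k)%N -> 0 <= j < 4 * k%:Z ->
  norm1 (diamond_pt k j) = k /\ diamond_pos k (diamond_pt k j) = j.
Proof.
rewrite /norm1 => k_gt0 Hj.
by case: (diamond_pt_cases k j) => [[? ->]|[[? ->]|[[? ->]|[? ->]]]];
  match goal with |- context [diamond_pos _ ?p] => have := diamond_pos_cases k p end;
  rewrite /=; lia.
Qed.

(* Position P of layer k+1 lies on a side, at offset r from its first corner, and q is
   the position of layer k just inside it, 4k standing for 0. *)
Definition above (k : nat) (P q r : int) : Prop :=
  0 <= r <= k%:Z /\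
  ((P = r /\ q = r) \/ (P = k%:Z + 1 + r /\ q = k%:Z + r) \/
   (P = 2 * k%:Z + 2 + r /\ q = 2 * k%:Z + r) \/
   (P = 3 * k%:Z + 3 + r /\ q = 3 * k%:Z + r)).

Lemma inner_neighbours (k : nat) (p : vertex) : (0 < k)%N -> norm1 p = k.+1 ->
  exists q r, above k (diamond_pos k.+1 p) q r /\
   (forall u, adjacent u p -> norm1 u = k ->
      diamond_pos k u = q \/ (q = 4 * k%:Z /\ diamond_pos k u = 0) \/
      (0 < r /\ diamond_pos k u = q - 1)) /\
   (exists u, [/\ adjacent u p, norm1 u = k &
      diamond_pos k u = q \/ (q = 4 * k%:Z /\ diamond_pos k u = 0)]) /\
   (0 < r -> exists u, [/\ adjacent u p, norm1 u = k & diamond_pos k u = q - 1]).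
Proof.
case: p => a b; rewrite /norm1 /adjacent /= => k_gt0 Hp.
have := diamond_pos_cases k.+1 (a, b).
move=> /= [[H1 [H2 ->]]|[[H1 [H2 ->]]|[[H1 [H2 ->]]|[H1 [H2 [H3 ->]]]]]].
- exists b, b; split; first by rewrite /above; lia.
  split; first by case=> c d /= ? ?; have /= := diamond_pos_cases k (c, d); lia.
  split; first by exists (a - 1, b); have /= := diamond_pos_cases k (a - 1, b); split => /=; lia.
  by exists (a, b - 1); have /= := diamond_pos_cases k (a, b - 1); split => /=; lia.
- exists (k%:Z - a), (- a); split; first by rewrite /above; lia.
  split; first by case=> c d /= ? ?; have /= := diamond_pos_cases k (c, d); lia.
  split; first by exists (a, b - 1); have /= := diamond_pos_cases k (a, b - 1); split => /=; lia.
  by exists (a + 1, b); have /= := diamond_pos_cases k (a + 1, b); split => /=; lia.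
- exists (2 * k%:Z - b), (- b); split; first by rewrite /above; lia.
  split; first by case=> c d /= ? ?; have /= := diamond_pos_cases k (c, d); lia.
  split; first by exists (a + 1, b); have /= := diamond_pos_cases k (a + 1, b); split => /=; lia.
  by exists (a, b + 1); have /= := diamond_pos_cases k (a, b + 1); split => /=; lia.
- exists (3 * k%:Z + a), a; split; first by rewrite /above; lia.
  split; first by case=> c d /= ? ?; have /= := diamond_pos_cases k (c, d); lia.
  split; first by exists (a, b + 1); have /= := diamond_pos_cases k (a, b + 1); split => /=; lia.
  by exists (a - 1, b); have /= := diamond_pos_cases k (a - 1, b); split => /=; lia.
Qed.

(* [lift_pos k h] is the position on layer k+1 of an outward neighbour of position h of
   layer k; the shadow of an arc of layer k is the arc between the lifts of its ends. *)
Definition lift_pos (k : nat) (h : int) : int :=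
  if h < k%:Z then h
  else if h < 2 * k%:Z then h + 1
  else if h < 3 * k%:Z then h + 2
  else h + 3.

Lemma lift_pos_cases (k : nat) (h : int) :
  (h < k%:Z /\ lift_pos k h = h) \/ (k%:Z <= h < 2 * k%:Z /\ lift_pos k h = h + 1) \/
  (2 * k%:Z <= h < 3 * k%:Z /\ lift_pos k h = h + 2) \/
  (3 * k%:Z <= h /\ lift_pos k h = h + 3).
Proof. by rewrite /lift_pos; case: ifP => ?; [|case: ifP => ?; [|case: ifP => ?]]; lia. Qed.

(* The cyclic arc of positions lo..hi of layer K, where lo <= 0 and negative positions are
   read modulo 4K; a proper arc misses at least one position. *)
Definition in_arc (K lo hi p : int) : Prop := p <= hi \/ 4 * K + lo <= p.

Definition proper_arc (K lo hi : int) : Prop :=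
  - (4 * K) < lo <= 0 /\ 0 <= hi < 4 * K /\ hi - lo <= 4 * K - 2.

Lemma lift_arc_bounds (k : nat) lo hi : (0 < k)%N -> proper_arc k lo hi ->
  [/\ 0 <= lift_pos k hi, 0 <= lift_pos k (- lo) &
      lift_pos k hi + lift_pos k (- lo) <= 4 * k%:Z + 1].
Proof.
rewrite /proper_arc => k_gt0 Harc.
by have := lift_pos_cases k hi; have := lift_pos_cases k (- lo); split; lia.
Qed.

Lemma lift_arc_size (k : nat) lo hi : (0 < k)%N -> proper_arc k lo hi ->
  hi - lo <= lift_pos k hi + lift_pos k (- lo).
Proof.
rewrite /proper_arc => k_gt0 Harc.
by have := lift_pos_cases k hi; have := lift_pos_cases k (- lo); lia.
Qed.

Lemma proper_arc_grow (k : nat) lo hi (n : int) : (0 < k)%N -> proper_arc k lo hi ->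
  0 <= n -> n < 4 * k.+1%:Z - (lift_pos k hi + lift_pos k (- lo) + 1) ->
  proper_arc k.+1 (- lift_pos k (- lo) - n) (lift_pos k hi) /\
  proper_arc k.+1 (- lift_pos k (- lo)) (lift_pos k hi + n).
Proof.
rewrite /proper_arc => k_gt0 Harc n_ge0 Hn.
by have := lift_pos_cases k hi; have := lift_pos_cases k (- lo); lia.
Qed.

Lemma shadow_arcP (k : nat) lo hi p : (0 < k)%N -> proper_arc k lo hi -> norm1 p = k.+1 ->
  in_arc k.+1 (- lift_pos k (- lo)) (lift_pos k hi) (diamond_pos k.+1 p) <->
  forall u, adjacent u p -> norm1 u = k -> in_arc k lo hi (diamond_pos k u).
Proof.
move=> k_gt0 Harc Hp.
have [q [r [Hq [Hinner [[u1 [Hu1 Hu1k Hq1]] Hr]]]]] := inner_neighbours k_gt0 Hp.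
have -> : in_arc k.+1 (- lift_pos k (- lo)) (lift_pos k hi) (diamond_pos k.+1 p) <->
    in_arc k lo hi q /\ (0 < r -> in_arc k lo hi (q - 1)).
  move: Hq Harc; rewrite /above /proper_arc /in_arc => Hq Harc.
  by have := lift_pos_cases k hi; have := lift_pos_cases k (- lo); lia.
split=> [[Hin Hin1] u Hu Huk | Hall].
  have := Hinner u Hu Huk; have := diamond_pos_range k_gt0 Huk.
  by move: Hin Hin1 Harc; rewrite /in_arc /proper_arc; lia.
split.
  have := Hall u1 Hu1 Hu1k; have := diamond_pos_range k_gt0 Hu1k.
  by move: Hq1 Harc; rewrite /in_arc /proper_arc; lia.
by move=> /Hr [u2 [Hu2 Hu2k <-]]; exact: Hall.
Qed.

Lemma seal_arc (k : nat) slo shi lo hi (low : bool) (n : int) p u :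
  (0 < k)%N -> proper_arc k lo hi -> slo <= 0 <= shi ->
  (if low then lo = slo /\ shi < hi else hi = shi /\ lo < slo) ->
  norm1 p = k -> in_arc k slo shi (diamond_pos k p) ->
  adjacent p u -> norm1 u = k.+1 -> 1 <= n ->
  if low then in_arc k.+1 (- lift_pos k (- lo) - n) (lift_pos k hi) (diamond_pos k.+1 u)
  else in_arc k.+1 (- lift_pos k (- lo)) (lift_pos k hi + n) (diamond_pos k.+1 u).
Proof.
move=> k_gt0 Harc Hs Hlow Hp Hin Hpu Hu n_ge1.
have [q [r [Hq [Hinner _]]]] := inner_neighbours k_gt0 Hu.
have := Hinner p Hpu Hp; have := diamond_pos_range k_gt0 Hp.
move: Hq Harc Hin; rewrite /above /proper_arc /in_arc.
have := lift_pos_cases k hi; have := lift_pos_cases k (- lo).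
by case: low Hlow; lia.
Qed.

Definition offset (v x : vertex) : vertex := (x.1 - v.1, x.2 - v.2).
Definition shift (v p : vertex) : vertex := (v.1 + p.1, v.2 + p.2).
Definition dist (v x : vertex) : nat := norm1 (offset v x).
Definition layer_pos (v : vertex) (k : nat) (x : vertex) : int := diamond_pos k (offset v x).

Lemma offset_shift v p : offset v (shift v p) = p.
Proof. by case: p => a b; rewrite /offset /=; congr pair; ring. Qed.

Lemma shift_offset v x : shift v (offset v x) = x.
Proof. by case: x => a b; rewrite /shift /=; congr pair; ring. Qed.

Lemma adjacent_offset v x y : adjacent (offset v x) (offset v y) <-> adjacent x y.
Proof. rewrite /adjacent /=; lia. Qed.

Lemma adjacent_sym x y : adjacent x y -> adjacent y x.
Proof. rewrite /adjacent; lia. Qed.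

Lemma dist_adjacent v x y : adjacent x y ->
  dist v y = (dist v x).+1 \/ dist v x = (dist v y).+1.
Proof. rewrite /adjacent /dist /norm1 /=; lia. Qed.

Lemma dist_eq0 v x : dist v x = 0%N <-> x = v.
Proof.
split=> [|->]; last by rewrite /dist /norm1 /= !subrr.
by rewrite -{2}(shift_offset v x) /dist /norm1 /shift; case: (offset v x) => a b /= ?;
  case: v => ? ? /=; congr pair; lia.
Qed.

Lemma layer_pos_range v (k : nat) x : (0 < k)%N -> dist v x = k ->
  0 <= layer_pos v k x < 4 * k%:Z.
Proof. exact: diamond_pos_range. Qed.

Lemma modz_wrap (d m : int) : - d <= m < d ->
  (0 <= m /\ (m %% d)%Z = m) \/ (m < 0 /\ (m %% d)%Z = m + d).
Proof.
move=> Hm; case: (ltrP m 0) => Hs; [right | left]; split => //.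
  by rewrite -(modzDr m d) modz_small //; lia.
by rewrite modz_small //; lia.
Qed.

Definition layer_pt (v : vertex) (k : nat) (j : int) : vertex :=
  shift v (diamond_pt k (j %% (4 * k%:Z))%Z).

Definition layer_segment (v : vertex) (k : nat) (a : int) (n : nat) : seq vertex :=
  [seq layer_pt v k (a + i%:Z) | i <- iota 0 n].

Lemma layer_ptK v (k : nat) j : (0 < k)%N ->
  dist v (layer_pt v k j) = k /\ layer_pos v k (layer_pt v k j) = (j %% (4 * k%:Z))%Z.
Proof.
move=> k_gt0; rewrite /dist /layer_pos /layer_pt offset_shift.
by apply: diamond_ptK => //; lia.
Qed.

Lemma layer_segment_dist v (k : nat) a n x : (0 < k)%N ->
  x \in layer_segment v k a n -> dist v x = k.
Proof. by move=> k_gt0 /mapP [i _ ->]; case: (layer_ptK v (a + i%:Z) k_gt0). Qed.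

Lemma mem_layer_segment v (k : nat) (a : int) (n : nat) (x : vertex) : (0 < k)%N ->
  - (4 * k%:Z) <= a -> a + n%:Z <= 4 * k%:Z ->
  x \in layer_segment v k a n <->
  dist v x = k /\ (a <= layer_pos v k x < a + n%:Z \/
                   a <= layer_pos v k x - 4 * k%:Z < a + n%:Z).
Proof.
move=> k_gt0 Ha Han; split.
  case/mapP => i; rewrite mem_iota add0n => /andP [_ Hi] ->.
  have [-> ->] := layer_ptK v (a + i%:Z) k_gt0; split => //.
  by have := @modz_wrap (4 * k%:Z) (a + i%:Z); lia.
move=> [Hx Hpos]; have := layer_pos_range k_gt0 Hx.
set p := layer_pos v k x in Hpos * => Hp.
have [i [Hi Hmod]] : exists i : nat, (i < n)%N /\ ((a + i%:Z) %% (4 * k%:Z))%Z = p.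
  case: Hpos => Hpos; [exists (absz (p - a)%R) | exists (absz (p - 4 * k%:Z - a)%R)];
    split; try lia.
    by rewrite modz_small; lia.
  by rewrite -(modzDr _ (4 * k%:Z)) modz_small; lia.
apply/mapP; exists i; first by rewrite mem_iota add0n Hi.
by rewrite /layer_pt Hmod /p /layer_pos diamond_posK // shift_offset.
Qed.

(* [Arc lo hi low]: the shielded arc of the current layer, whose next extension goes to
   its [lo] end iff [low]. *)
Inductive arc_state := Unstarted | Arc of int & int & bool | Closed.

Definition advance (v : vertex) (k : nat) (s : arc_state) (n : nat) :
    arc_state * seq vertex :=
  match s with
  | Unstarted =>
      if n == 0%N then (Unstarted, [::])
      else if (4 * k.+1 <= n)%N then (Closed, layer_segment v k.+1 0 (4 * k.+1))
      else (Arc 0 (n%:Z - 1) true, layer_segment v k.+1 0 n)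
  | Arc lo hi low =>
      let lo' := - lift_pos k (- lo) in
      let hi' := lift_pos k hi in
      let gap := 4 * k.+1%:Z - (hi' - lo' + 1) in
      if gap <= n%:Z then (Closed, layer_segment v k.+1 (hi' + 1) (absz gap))
      else if low then (Arc (lo' - n%:Z) hi' false, layer_segment v k.+1 (lo' - n%:Z) n)
      else (Arc lo' (hi' + n%:Z) true, layer_segment v k.+1 (hi' + 1) n)
  | Closed => (Closed, [::])
  end.

Fixpoint arc_at (v : vertex) (f : nat -> nat) (k : nat) : arc_state :=
  if k is k'.+1 then (advance v k' (arc_at v f k') (f k)).1 else Unstarted.

Definition protect_at (v : vertex) (f : nat -> nat) (k : nat) : seq vertex :=
  if k is k'.+1 then (advance v k' (arc_at v f k') (f k)).2 else [::].

Definition replay (v : vertex) (l : seq nat) : nat * arc_state * seq vertex :=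
  foldl (fun acc n => let: (k, s, _) := acc in
           let r := advance v k s n in (k.+1, r.1, r.2)) (0%N, Unstarted, [::]) l.

Definition strategy (v : vertex) : online_strategy := fun l => (replay v l).2.

Lemma prefixS (f : nat -> nat) i : Defs.prefix f i.+1 = rcons (Defs.prefix f i) (f i.+1).
Proof. by rewrite /Defs.prefix -[i.+1]addn1 iotaD map_cat /= cats1 addnC. Qed.

Lemma replay_prefix v f i : replay v (Defs.prefix f i) = (i, arc_at v f i, protect_at v f i).
Proof.
elim: i => [//|i IH].
by rewrite prefixS /replay -cats1 foldl_cat -/(replay v _) IH.
Qed.

Lemma strategy_prefix v f i : strategy v (Defs.prefix f i) = protect_at v f i.
Proof. by rewrite /strategy replay_prefix. Qed.

Arguments lift_pos : simpl never.
Arguments layer_segment : simpl never.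

Section Shielding.
Variables (v : vertex) (f : nat -> nat).
Local Notation arc_at := (arc_at v f).
Local Notation protect_at := (protect_at v f).

Definition shielded (k : nat) (x : vertex) : Prop :=
  match arc_at k with
  | Unstarted => False
  | Arc lo hi _ => in_arc k lo hi (layer_pos v k x)
  | Closed => True
  end.

Definition shadowed (k : nat) (x : vertex) : Prop :=
  if k is k'.+1 then
    match arc_at k' with
    | Unstarted => False
    | Arc lo hi _ => in_arc k (- lift_pos k' (- lo)) (lift_pos k' hi) (layer_pos v k x)
    | Closed => True
    end
  else False.

Lemma arc_atS k : arc_at k.+1 = (advance v k (arc_at k) (f k.+1)).1.
Proof. by []. Qed.

Lemma arc_at_proper k :
  if arc_at k is Arc lo hi _ then (0 < k)%N /\ proper_arc k lo hi else True.
Proof.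
elim: k => [//|k IH]; rewrite arc_atS.
case: (arc_at k) IH => [|lo hi low|] //= IH.
  case: eqP => Hn //=; case: ifP => Hbig //=.
  by split => //; move/negbT: Hbig; rewrite /proper_arc; lia.
case: IH => k_gt0 Harc; have [? ? ?] := lift_arc_bounds k_gt0 Harc.
case: ifP => Hgap //=; move/negbT: Hgap => Hgap.
have [? ?] := proper_arc_grow (n := (f k.+1)%:Z) k_gt0 Harc (ltac:(lia)) (ltac:(lia)).
by case: low.
Qed.

Lemma protect_at_dist k x : x \in protect_at k -> dist v x = k.
Proof.
case: k => [//|k]; rewrite /protect_at; case: (arc_at k) => [|lo hi low|] //=.
  by case: eqP => _ //; case: ifP => _; apply: layer_segment_dist.
by case: ifP => _; [|case: low]; apply: layer_segment_dist.
Qed.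

Lemma size_protect_at k : (size (protect_at k) <= f k)%N.
Proof.
case: k => [//|k]; rewrite /protect_at; have := arc_at_proper k.
case: (arc_at k) => [|lo hi low|] //= Hk.
  by case: eqP => _ //; case: ifP; rewrite /layer_segment size_map size_iota //; lia.
case: Hk => k_gt0 Harc; have [? ? ?] := lift_arc_bounds k_gt0 Harc.
case: ifP => Hgap; first by rewrite /layer_segment size_map size_iota; lia.
by case: low; rewrite /layer_segment size_map size_iota.
Qed.

Lemma shieldedE k x : (0 < k)%N -> dist v x = k ->
  shielded k x <-> shadowed k x \/ x \in protect_at k.
Proof.
case: k => [//|k] _ Hx; rewrite /shielded /shadowed /protect_at arc_atS.
have := layer_pos_range (ltn0Sn k) Hx; have := arc_at_proper k.
case: (arc_at k) => [|lo hi low|] /= Hk Hpos.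
- case: eqP => Hn /=; first by split => [[]|[[]|]].
  by case: ifP => Hbig /=; rewrite mem_layer_segment // /in_arc; lia.
- case: Hk => k_gt0 Harc; have [? ? ?] := lift_arc_bounds k_gt0 Harc.
  by case: ifP => Hgap /=; [|case: low => /=]; rewrite mem_layer_segment // /in_arc; lia.
- by split => // _; left.
Qed.

Lemma shadowedP k x : (0 < k)%N -> dist v x = k.+1 ->
  shadowed k.+1 x <-> forall y, adjacent y x -> dist v y = k -> shielded k y.
Proof.
move=> k_gt0 Hx; rewrite /shadowed /shielded; have := arc_at_proper k.
case: (arc_at k) => [|lo hi low|] Hk; last by split.
  split=> // Hall.
  have [q [r [_ [_ [[u [Hu Huk _]] _]]]]] := inner_neighbours k_gt0 Hx.
  by apply: (Hall (shift v u)); [rewrite -(adjacent_offset v) |]; rewrite /dist offset_shift.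
case: Hk => _ Harc; rewrite /layer_pos (shadow_arcP _ Harc Hx) //.
split=> Hall y; first by rewrite -adjacent_offset /dist => /Hall; apply.
move=> Hy Hyk; rewrite -(offset_shift v y).
by apply: Hall; [rewrite -(adjacent_offset v) |]; rewrite /dist offset_shift.
Qed.

Lemma unshielded_neighbour k x : dist v x = k.+1 -> ~ shielded k.+1 x ->
  exists y, [/\ adjacent y x, dist v y = k & ~ shielded k y].
Proof.
case: (posnP k) => [-> | k_gt0] Hx Hnsh.
  by exists v; split; [move: Hx; rewrite /adjacent /dist /norm1 /=; lia | apply/dist_eq0 |].
apply: NNPP => Hnone; apply/Hnsh/(shieldedE _ Hx) => //; left.
apply/(shadowedP k_gt0 Hx) => y Hy Hyk.
by apply: NNPP => Hny; apply: Hnone; exists y.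
Qed.

Hypothesis f_pos : forall k, arc_at k <> Unstarted -> (1 <= f k.+1)%N.

Lemma arc_at_next k lo hi low : arc_at k = Arc lo hi low ->
  arc_at k.+1 = Closed \/ exists lo' hi' low', arc_at k.+1 = Arc lo' hi' low' /\
    (if low' then lo' = - lift_pos k (- lo) /\ lift_pos k hi < hi'
     else hi' = lift_pos k hi /\ lo' < - lift_pos k (- lo)).
Proof.
move=> E; have n_ge1 := @f_pos k (ltac:(by rewrite E)).
rewrite arc_atS E /=; case: ifP => _; [by left | right].
by case: low {E}; do 3!eexists; (split; first by []); lia.
Qed.

Lemma shielded_outward k x y : (0 < k)%N -> dist v x = k -> shadowed k x ->
  adjacent x y -> dist v y = k.+1 -> shielded k.+1 y.
Proof.
case: k => [//|k] _ Hx Hsh Hxy Hy; rewrite /shadowed in Hsh; rewrite /shielded arc_atS.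
have := arc_at_proper k.
case E: (arc_at k) Hsh => [|lo0 hi0 low0|] // Hsh; last by rewrite arc_atS E.
move=> [k_gt0 Harc0]; have [? ? ?] := lift_arc_bounds k_gt0 Harc0.
have [-> //|[lo [hi [low [E1 Hlow]]]]] := arc_at_next E; rewrite E1 /=.
have := arc_at_proper k.+1; rewrite E1 => -[k1_gt0 Harc].
have n_ge1 := @f_pos k.+1 (ltac:(by rewrite E1)).
have := @seal_arc k.+1 (- lift_pos k (- lo0)) (lift_pos k hi0) lo hi low (f k.+2)%:Z _ _
  k1_gt0 Harc (ltac:(lia)) Hlow Hx Hsh
  ((adjacent_offset v x y).2 Hxy) Hy (ltac:(lia)).
by case: low {Hlow E1}; case: ifP => //= _ Hin; exact: Hin.
Qed.

Lemma shielded_closed x y : shielded (dist v x) x -> adjacent x y ->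
  ~ shielded (dist v y) y -> x \in protect_at (dist v x).
Proof.
move=> Hx Hxy Hy; have d_gt0 : (0 < dist v x)%N.
  by case: (posnP (dist v x)) Hx => [->|//]; rewrite /shielded.
have [Hsh|//] := (shieldedE d_gt0 erefl).1 Hx.
exfalso; apply: Hy; case: (dist_adjacent v Hxy) => Hd.
  by rewrite Hd; apply: shielded_outward Hsh Hxy Hd.
move: Hsh; rewrite Hd; case: (posnP (dist v y)) => [-> //|y_gt0 Hsh].
by apply: (shadowedP y_gt0 Hd).1 Hsh y (adjacent_sym Hxy) erefl.
Qed.

End Shielding.

Section Game.
Variables (v : vertex) (f : nat -> nat).
Local Notation s := (strategy v).

Lemma protectedS t x :
  protected v s f t.+1 x <-> protected v s f t x \/ x \in protect_at v f t.+1.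
Proof. by rewrite /protected /= strategy_prefix. Qed.

Lemma burningS t x : burning v s f t.+1 x <-> burning v s f t x \/
  (~ protected v s f t.+1 x /\ exists y, adjacent y x /\ burning v s f t y).
Proof. by rewrite /burning /protected /= strategy_prefix. Qed.

Lemma protected_at t x : protected v s f t x <->
  [/\ (0 < dist v x)%N, (dist v x <= t)%N & x \in protect_at v f (dist v x)].
Proof.
elim: t => [|t IH]; first by rewrite /protected /=; split => // -[]; lia.
rewrite protectedS IH; split.
  move=> [[? ? ?] | Hx]; first by split => //; lia.
  by rewrite (protect_at_dist Hx); split.
move=> [d_gt0 Hdt Hx]; case: (ltngtP (dist v x) t.+1) => Hd; last by right; rewrite -Hd.
  by left; split => //; lia.
lia.
Qed.

Hypothesis f_pos : forall k, arc_at v f k <> Unstarted -> (1 <= f k.+1)%N.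

Lemma burning_at t x :
  burning v s f t x <-> (dist v x <= t)%N /\ ~ shielded v f (dist v x) x.
Proof.
elim: t x => [|t IH] x.
  rewrite /burning /=; split => [->|[Hd _]]; last by apply/dist_eq0; lia.
  by rewrite (proj2 (dist_eq0 v v) erefl); split => // -[].
rewrite burningS IH; split.
- case=> [[Hd Hnsh]|[Hnp [y [Hyx /IH [Hy Hny]]]]]; first by split => //; lia.
  have Hd : (dist v x <= t.+1)%N by case: (dist_adjacent v Hyx); lia.
  split=> // Hsh; apply/Hnp/protected_at; split => //.
    by case: (posnP (dist v x)) Hsh => [->|//]; rewrite /shielded.
  by move: (shielded_closed f_pos Hsh (adjacent_sym Hyx) Hny).
- move=> [Hd Hnsh]; case: (leqP (dist v x) t) => Hdt; first by left.
  have {Hd Hdt} Hd : dist v x = t.+1 by apply/eqP; rewrite eqn_leq Hd Hdt.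
  right; split.
    by move/protected_at => [d_gt0 _ Hx]; apply/Hnsh/shieldedE => //; right.
  rewrite Hd in Hnsh; have [y [Hyx Hy Hny]] := unshielded_neighbour Hd Hnsh.
  by exists y; split => //; apply/IH; rewrite Hy.
Qed.

End Game.

Lemma arc_at_size v f k : match arc_at v f k with
  | Unstarted => (\sum_(1 <= i < k.+1) f i = 0)%N
  | Arc lo hi _ => (\sum_(1 <= i < k.+1) f i)%:Z <= hi - lo + 1
  | Closed => True
  end.
Proof.
elim: k => [|k IH]; first by rewrite big_geq.
rewrite arc_atS big_nat_recr //=; have := arc_at_proper v f k.
case: (arc_at v f k) IH => [|lo hi low|] IH //= Hk.
  by case: eqP => Hn /=; [|case: ifP => //=]; rewrite IH; lia.
case: Hk => k_gt0 Harc; have := lift_arc_size k_gt0 Harc.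
by case: ifP => //=; case: low => /=; lia.
Qed.

Lemma arc_at_closed v f N : (0 < N)%N -> (4 * N <= \sum_(1 <= i < N.+1) f i)%N ->
  arc_at v f N = Closed.
Proof.
case: N => [//|N] _; rewrite arc_atS big_nat_recr //=.
have := arc_at_size v f N; have := arc_at_proper v f N.
case: (arc_at v f N) => [|lo hi low|] //= Hk Hsize HN.
  by case: eqP => Hn /=; [lia | case: ifP => //=; lia].
case: Hk => k_gt0 Harc; have := lift_arc_size k_gt0 Harc.
by case: ifP => //=; lia.
Qed.

Lemma arc_at_unstarted v f M : (forall i, (1 <= i)%N -> (i < M)%N -> f i = 0%N) ->
  forall k, (k < M)%N -> arc_at v f k = Unstarted.
Proof. by move=> Hearly; elim=> [//|k IH] HkM; rewrite arc_atS IH ?(ltnW HkM) //= Hearly. Qed.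

Lemma firefighters_pos v f M : (forall i, (1 <= i)%N -> (i < M)%N -> f i = 0%N) ->
  (forall i, (M <= i)%N -> (1 <= f i)%N) ->
  forall k, arc_at v f k <> Unstarted -> (1 <= f k.+1)%N.
Proof.
move=> Hearly Hlate k Hk; apply: Hlate; case: (ltnP k M) => HkM; last exact: leqW.
by case: Hk; apply: arc_at_unstarted Hearly k HkM.
Qed.

Local Close Scope ring_scope.

Theorem theorem2 (v : vertex) :
  exists s : online_strategy,
    forall f : nat -> nat,
      (exists N, (1 <= N)%N /\ (4 * N <= \sum_(1 <= i < N.+1) f i)%N) ->
      (exists M, (1 <= M)%N /\
         (forall i, (M <= i)%N -> (1 <= f i)%N) /\
         (forall i, (1 <= i)%N -> (i < M)%N -> f i = 0%N)) ->
      legal_play v s f /\ player1_wins v s f.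
Proof.
exists (strategy v) => f [N [N_gt0 HN]] [M [_ [Hlate Hearly]]].
have f_pos := @firefighters_pos v f M Hearly Hlate.
split.
  move=> i i_gt0; rewrite strategy_prefix; split; first exact: size_protect_at.
  move=> x /protect_at_dist Hx.
  by split=> [/(burning_at f_pos) [] | /protected_at []]; rewrite Hx; lia.
exists N; split => // x /(burning_at f_pos) [Hd Hnsh]; apply/(burning_at f_pos).
split=> //; suff: dist v x != N by lia.
by apply/eqP => Hx; apply: Hnsh; rewrite Hx /shielded (arc_at_closed v N_gt0 HN).
Qed.
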